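(* Let $(\Omega,\mathcal F)$ be a measurable space, $\mathcal X$ the set of bounded measurable functions, $\mathcal P_1,\dots,\mathcal P_n$ nonempty sets of probability measures on $(\Omega,\mathcal F)$, and $\alpha_1,\dots,\alpha_n\in(0,1)$. Then for all $X\in\mathcal X$, $$\mathop{\square}_{i=1}^n\sup_{\mathbb Q\in\mathcal P_i}\mathrm{VaR}^{\mathbb Q}_{\alpha_i}(X)=\inf\{x\in\mathbb R:\{X>x\}\in\mathcal C\},\qquad \mathcal C=\Big\{\bigcup_{i=1}^nA_i: A_i\in\mathcal F,\ \sup_{\mathbb Q\in\mathcal P_i}\mathbb Q(A_i)\le\alpha_i,\ i=1,\dots,n\Big\}.$$
   Context: For a probability $\mathbb Q$ and $\alpha\in(0,1)$, $\mathrm{VaR}^{\mathbb Q}_\alpha(X)=\inf\{x\in\mathbb R:\mathbb Q(X\ge x)\le\alpha\}$. Inf-convolution: $\mathop{\square}_{i=1}^n\rho_i(X)=\inf\{\sum_{i=1}^n\rho_i(X_i): X_i\in\mathcal X,\ \sum_iX_i=X\}$. *)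

From HB Require Import structures.
From mathcomp Require Import all_boot all_order all_algebra.
From mathcomp Require Import all_classical all_reals.
From mathcomp Require Import all_analysis.
Set Implicit Arguments. Unset Strict Implicit. Unset Printing Implicit Defensive.
Import Order.TTheory GRing.Theory Num.Theory.
Local Open Scope classical_set_scope.
Local Open Scope ring_scope.
Local Open Scope ereal_scope.

Section Defs.
Context {d : measure_display} {T : measurableType d} {R : realType}.

Definition bounded_measurable (X : T -> R) : Prop :=
  measurable_fun setT X /\ exists M : R, forall w, (`|X w| <= M)%R.

Definition VaR (Q : probability T R) (alpha : R) (X : T -> R) : \bar R :=
  ereal_inf [set x%:E | x in [set x : R | Q [set w | (x <= X w)%R] <= alpha%:E]].

Definition supVaR (P : set (probability T R)) (alpha : R) (X : T -> R) : \bar R :=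
  ereal_sup [set VaR Q alpha X | Q in P].

Definition infconv (n : nat) (rho : 'I_n -> (T -> R) -> \bar R) (X : T -> R) : \bar R :=
  ereal_inf [set \sum_(i < n) rho i (Xs i) | Xs in
    [set Xs : 'I_n -> T -> R | (forall i, bounded_measurable (Xs i)) /\
       (forall w, (\sum_(i < n) Xs i w)%R = X w)]].

Definition classC (n : nat) (P : 'I_n -> set (probability T R)) (alpha : 'I_n -> R)
  : set (set T) :=
  [set A | exists As : 'I_n -> set T,
     (forall i, measurable (As i) /\
        ereal_sup [set Q (As i) | Q in P i] <= (alpha i)%:E) /\
     A = \big[setU/set0]_(i < n) As i].

End Defs.

From HB Require Import structures.
From mathcomp Require Import all_boot all_order all_algebra.
From mathcomp Require Import all_classical all_reals.
From mathcomp Require Import all_analysis.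
From mathcomp Require Import measurable_realfun.
Set Implicit Arguments. Unset Strict Implicit. Unset Printing Implicit Defensive.
Import Order.TTheory GRing.Theory Num.Theory.
Local Open Scope classical_set_scope.
Local Open Scope ring_scope.
Local Open Scope ereal_scope.

(* If {X > x} is a union of
   sets A_i that are alpha_i-negligible for every Q in P_i, split X as
   min(X, x) plus the excess (X - x) cut into the pieces where A_i is the
   first set to contain the point; the i-th piece is at most c_i (with
   c_0 = x, c_i = 0 otherwise) off A_i, so its worst-case VaR is at most c_i.
   Conversely, given X = sum_i X_i and levels y_i just above the worst-case
   VaRs of the X_i, the sets {X_i > y_i} ∩ {X > sum_i y_i} are
   alpha_i-negligible and cover {X > sum_i y_i}. *)

Lemma bigsetU_ord_bigcup (T : Type) (n : nat) (F : 'I_n -> set T) :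
  \big[setU/set0]_(i < n) F i = \bigcup_i F i.
Proof.
rewrite -bigcup_seq; apply: eq_bigcupl; split=> i //= _.
exact: mem_index_enum.
Qed.

Section real_level_sets.
Context {d : measure_display} {T : measurableType d} {R : realType}.
Implicit Types f g : T -> R.

Lemma measurable_set_ltr f g : measurable_fun setT f -> measurable_fun setT g ->
  measurable [set w | (f w < g w)%R].
Proof.
move=> mf mg.
by have := measurable_fun_ltr mf mg measurableT (Y := [set true]) I; rewrite setTI.
Qed.

Lemma measurable_set_ler f g : measurable_fun setT f -> measurable_fun setT g ->
  measurable [set w | (f w <= g w)%R].
Proof.
move=> mf mg.
by have := measurable_fun_ler mf mg measurableT (Y := [set true]) I; rewrite setTI.
Qed.

End real_level_sets.

Section bounded_measurable_closure.
Context {d : measure_display} {T : measurableType d} {R : realType}.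
Implicit Types f g : T -> R.

Lemma bounded_measurable_cst (c : R) : bounded_measurable (cst c : T -> R).
Proof. by split; [exact: measurable_cst | exists `|c|%R]. Qed.

Lemma bounded_measurableD f g :
  bounded_measurable f -> bounded_measurable g -> bounded_measurable (f \+ g)%R.
Proof.
move=> [mf [Mf hf]] [mg [Mg hg]]; split; first exact: measurable_funD.
by exists (Mf + Mg)%R => w; rewrite (le_trans (ler_normD _ _)) ?lerD.
Qed.

Lemma bounded_measurableB f g :
  bounded_measurable f -> bounded_measurable g -> bounded_measurable (f \- g)%R.
Proof.
move=> [mf [Mf hf]] [mg [Mg hg]]; split; first exact: measurable_funB.
by exists (Mf + Mg)%R => w; rewrite (le_trans (ler_normB _ _)) ?lerD.
Qed.

Lemma bounded_measurable_minr f g :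
  bounded_measurable f -> bounded_measurable g -> bounded_measurable (f \min g)%R.
Proof.
move=> [mf [Mf hf]] [mg [Mg hg]]; split; first exact: measurable_minr.
exists (Num.max Mf Mg) => w /=; rewrite /Order.min.
by case: ifP => _; rewrite le_max ?hf ?hg ?orbT.
Qed.

Lemma bounded_measurable_indicM (A : set T) f : measurable A ->
  bounded_measurable f -> bounded_measurable (fun w => \1_A w * f w)%R.
Proof.
move=> mA [mf [M hf]]; split.
  by apply: measurable_funM => //; exact: measurable_indic.
exists M => w; rewrite indicE; case: (w \in A); rewrite ?mul1r ?mul0r //.
by rewrite normr0 (le_trans _ (hf w)).
Qed.

End bounded_measurable_closure.

Section VaR_bounds.
Context {d : measure_display} {T : measurableType d} {R : realType}.
Implicit Types (Q : probability T R) (P : set (probability T R)) (a : R)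
  (Y : T -> R).

Lemma VaR_le Q a Y (c : R) :
  (forall y : R, (c < y)%R -> Q [set w | (y <= Y w)%R] <= a%:E) ->
  VaR Q a Y <= c%:E.
Proof.
move=> hQ; apply/lee_addgt0Pr => e e0; apply: ereal_inf_lbound.
by exists (c + e)%R; [apply: hQ; rewrite ltrDl | rewrite EFinD].
Qed.

Lemma VaR_lt_measure Q a Y (y : R) : measurable_fun setT Y ->
  VaR Q a Y < y%:E -> Q [set w | (y <= Y w)%R] <= a%:E.
Proof.
move=> mY /ereal_inf_lt [_ [z hz <-]]; rewrite lte_fin => zy.
apply: le_trans hz; apply: le_measure; rewrite ?inE.
- exact: measurable_set_ler (measurable_cst _) mY.
- exact: measurable_set_ler (measurable_cst _) mY.
by move=> w /= /(le_trans (ltW zy)).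
Qed.

Lemma VaR_ge Q a Y (m : R) : (a < 1)%R -> (forall w, m <= Y w)%R ->
  m%:E <= VaR Q a Y.
Proof.
move=> a1 hm; apply: le_ereal_inf_tmp => _ [x hx <-]; rewrite lee_fin.
rewrite leNgt; apply/negP => xm.
have levelT : [set w | (x <= Y w)%R] = setT.
  by apply/seteqP; split=> // w _ /=; exact: ltW (lt_le_trans xm (hm w)).
by move: hx; rewrite /= levelT probability_setT lee_fin leNgt a1.
Qed.

Lemma VaR_le_outside Q a Y (B : set T) (c : R) :
  measurable_fun setT Y -> measurable B -> (forall w, ~ B w -> Y w <= c)%R ->
  Q B <= a%:E -> VaR Q a Y <= c%:E.
Proof.
move=> mY mB hY QB; apply: VaR_le => y cy; apply: le_trans QB.
apply: le_measure; rewrite ?inE //.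
  exact: measurable_set_ler (measurable_cst _) mY.
move=> w /= yY; apply: contrapT => /hY Yc.
by move: (lt_le_trans cy (le_trans yY Yc)); rewrite ltxx.
Qed.

Lemma supVaR_le_outside P a Y (B : set T) (c : R) :
  measurable_fun setT Y -> measurable B -> (forall w, ~ B w -> Y w <= c)%R ->
  ereal_sup [set Q B | Q in P] <= a%:E -> supVaR P a Y <= c%:E.
Proof.
move=> mY mB hY PB; apply: ge_ereal_sup => _ [Q PQ <-].
apply: VaR_le_outside hY _ => //; apply: le_trans PB.
by apply: ereal_sup_ubound; exists Q.
Qed.

Lemma supVaR_fin_num P a Y : P !=set0 -> (0 < a < 1)%R ->
  bounded_measurable Y -> supVaR P a Y \is a fin_num.
Proof.
move=> [Q PQ] /andP[a0 a1] [mY [M hM]].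
have lo : (- M)%:E <= supVaR P a Y.
  apply: le_trans (ereal_sup_ubound _) => /=; last by exists Q.
  by apply: VaR_ge => // w; have := hM w; rewrite ler_norml => /andP[].
have hi : supVaR P a Y <= M%:E.
  apply: (supVaR_le_outside mY measurable0).
    by move=> w _; have := hM w; rewrite ler_norml => /andP[].
  by apply: ge_ereal_sup => _ [Q' _ <-]; rewrite measure0 lee_fin ltW.
by rewrite fin_numElt (lt_le_trans (ltNyr _) lo) (le_lt_trans hi (ltry _)).
Qed.

End VaR_bounds.

Section level_set_decomposition.
Context {d : measure_display} {T : measurableType d} {R : realType}.
Variables (n : nat) (A : 'I_n -> set T) (X : T -> R) (x : R).

Definition prefix_union (k : nat) : set T :=
  \bigcup_(i in [set i : 'I_n | (i < k)%N]) A i.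

Definition excess_on (k : nat) : T -> R :=
  fun w => (\1_(prefix_union k) w * (X w - x))%R.

Definition level_part_bound (i : 'I_n) : R :=
  if nat_of_ord i == 0%N then x else 0%R.

Definition level_part (i : 'I_n) : T -> R :=
  (excess_on i.+1 \- excess_on i \+
   (if nat_of_ord i == 0%N then X \min cst x else cst 0))%R.

Lemma prefix_union0 : prefix_union 0 = set0.
Proof. by apply/seteqP; split=> w // [[]]. Qed.

Lemma prefix_unionS (i : 'I_n) : prefix_union i.+1 = prefix_union i `|` A i.
Proof.
apply/seteqP; split=> w.
  move=> [j /=]; rewrite ltnS leq_eqVlt => /orP[/eqP/val_inj -> |ji] Aj.
    by right.
  by left; exists j.
rewrite /prefix_union => -[[j /= ji Aj]|Ai]; last by exists i => /=.
by exists j => //=; exact: ltnW.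
Qed.

Lemma prefix_union_all : prefix_union n = \big[setU/set0]_(i < n) A i.
Proof. by rewrite bigsetU_ord_bigcup; apply: eq_bigcupl; split=> i //= _. Qed.

Lemma measurable_prefix_union k :
  (forall i, measurable (A i)) -> measurable (prefix_union k).
Proof. by move=> mA; apply: fin_bigcup_measurable => //; exact: finite_finset. Qed.

Lemma level_part_le_outside (i : 'I_n) w :
  ~ A i w -> (level_part i w <= level_part_bound i)%R.
Proof.
move=> nAi; rewrite /level_part /excess_on /= prefix_unionS !indicE.
rewrite in_setU (memNset nAi) orbF subrr add0r /level_part_bound.
by case: ifP => _ //=; rewrite ge_min lexx orbT.
Qed.

Lemma sum_level_part_bound : (0 < n)%N -> (\sum_(i < n) level_part_bound i)%R = x.
Proof.
move=> n0; rewrite (bigD1 (Ordinal n0)) //= big1 ?addr0 // => i.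
by rewrite -val_eqE /level_part_bound => /negbTE ->.
Qed.

Lemma sum_level_part w : (0 < n)%N ->
  \big[setU/set0]_(i < n) A i = [set w | (x < X w)%R] ->
  (\sum_(i < n) level_part i w)%R = X w.
Proof.
move=> n0 AX; rewrite big_split /=.
rewrite -(big_mkord xpredT (fun k => excess_on k.+1 w - excess_on k w)%R).
rewrite telescope_sumr // (bigD1 (Ordinal n0)) //= big1 ?addr0; last first.
  by move=> i; rewrite -val_eqE => /negbTE /= ->.
rewrite /excess_on prefix_union0 prefix_union_all AX !indicE in_set0 mul0r subr0.
have [xX|Xx] := ltrP x (X w).
  by rewrite mem_set // mul1r subrK.
by rewrite memNset ?mul0r ?add0r //= ltNge Xx.
Qed.

Lemma bounded_measurable_level_part (i : 'I_n) : bounded_measurable X ->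
  (forall i, measurable (A i)) -> bounded_measurable (level_part i).
Proof.
move=> bX mA.
have bXx := bounded_measurableB bX (bounded_measurable_cst x).
have bexcess k : bounded_measurable (excess_on k).
  exact: bounded_measurable_indicM (measurable_prefix_union k mA) bXx.
apply: bounded_measurableD; first exact: bounded_measurableB.
case: ifP => _; last exact: bounded_measurable_cst.
exact: bounded_measurable_minr bX (bounded_measurable_cst x).
Qed.

End level_set_decomposition.

Section inf_convolution_of_supVaR.
Context {d : measure_display} {T : measurableType d} {R : realType}.
Variables (n : nat) (P : 'I_n -> set (probability T R)) (alpha : 'I_n -> R).

Lemma infconv_supVaR_le_level (X : T -> R) (x : R) : (0 < n)%N ->
  bounded_measurable X -> classC P alpha [set w | (x < X w)%R] ->
  infconv (fun i => supVaR (P i) (alpha i)) X <= x%:E.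
Proof.
move=> n0 bX [A [hA AX]].
have mA i : measurable (A i) := (hA i).1.
have bXs i : bounded_measurable (level_part A X x i).
  exact: bounded_measurable_level_part.
apply: (@le_trans _ _ (\sum_(i < n) supVaR (P i) (alpha i) (level_part A X x i))).
  apply: ereal_inf_lbound; exists (level_part A X x) => //; split => // w.
  by rewrite sum_level_part.
have -> : x%:E = \sum_(i < n) (level_part_bound x i)%:E.
  by rewrite sumEFin sum_level_part_bound.
apply: lee_sum => i _.
apply: (supVaR_le_outside _ (mA i) _ (hA i).2).
- exact: (bXs i).1.
- by move=> w; exact: level_part_le_outside.
Qed.

Lemma classC_level_of_supVaR_lt (Xs : 'I_n -> T -> R) (X : T -> R)
    (y : 'I_n -> R) :
  (forall i, measurable_fun setT (Xs i)) -> measurable_fun setT X ->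
  (forall w, \sum_(i < n) Xs i w = X w)%R ->
  (forall i, supVaR (P i) (alpha i) (Xs i) < (y i)%:E) ->
  classC P alpha [set w | (\sum_(i < n) y i < X w)%R].
Proof.
move=> mXs mX sumXs Xsy; set S := (\sum_(i < n) y i)%R.
exists (fun i => [set w | (y i < Xs i w)%R] `&` [set w | (S < X w)%R]); split.
  move=> i; split.
    by apply: measurableI; apply: measurable_set_ltr => //; exact: measurable_cst.
  apply: ge_ereal_sup => _ [Q PQ <-].
  have VaRy : VaR Q (alpha i) (Xs i) < (y i)%:E.
    by apply: le_lt_trans (Xsy i); apply: ereal_sup_ubound; exists Q.
  apply: le_trans (VaR_lt_measure (mXs i) VaRy).
  apply: le_measure; rewrite ?inE.
  - by apply: measurableI; apply: measurable_set_ltr => //; exact: measurable_cst.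
  - by apply: measurable_set_ler => //; exact: measurable_cst.
  by move=> w [/= /ltW].
rewrite bigsetU_ord_bigcup; apply/seteqP; split=> w /=; last by move=> [i _ []].
move=> SX; apply: contrapT => noi.
suff : (X w <= S)%R by rewrite leNgt SX.
rewrite -sumXs; apply: ler_sum => i _; rewrite leNgt; apply/negP => yX.
by apply: noi; exists i.
Qed.

Lemma classC_inf_le_sum_supVaR (Xs : 'I_n -> T -> R) (X : T -> R) : (0 < n)%N ->
  (forall i, P i !=set0) -> (forall i, (0 < alpha i < 1)%R) ->
  (forall i, bounded_measurable (Xs i)) -> measurable_fun setT X ->
  (forall w, \sum_(i < n) Xs i w = X w)%R ->
  ereal_inf [set x%:E | x in [set x : R | classC P alpha [set w | (x < X w)%R]]]
    <= \sum_(i < n) supVaR (P i) (alpha i) (Xs i).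
Proof.
move=> n0 Pne alpha01 bXs mX sumXs.
pose s i := fine (supVaR (P i) (alpha i) (Xs i)).
have sE i : supVaR (P i) (alpha i) (Xs i) = (s i)%:E.
  by rewrite fineK // supVaR_fin_num.
rewrite (eq_bigr _ (fun i _ => sE i)) sumEFin; apply/lee_addgt0Pr => e e0.
pose y i := (s i + e / n%:R)%R.
have n0R : (n%:R != 0 :> R)%R by rewrite pnatr_eq0 -lt0n.
have sumy : (\sum_(i < n) y i = \sum_(i < n) s i + e)%R.
  by rewrite big_split /= sumr_const card_ord -(mulr_natr (e / n%:R)) divfK.
apply: ereal_inf_lbound; exists (\sum_(i < n) y i)%R; last by rewrite sumy EFinD.
apply: classC_level_of_supVaR_lt (fun i => (bXs i).1) mX sumXs _ => i.
by rewrite sE lte_fin /y ltrDl divr_gt0 // ltr0n.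
Qed.

End inf_convolution_of_supVaR.

Theorem corollary1 (d : measure_display) (T : measurableType d) (R : realType)
  (n : nat) (hn : (0 < n)%N)
  (P : 'I_n -> set (probability T R)) (hP : forall i, P i !=set0)
  (alpha : 'I_n -> R) (halpha : forall i, (0 < alpha i < 1)%R)
  (X : T -> R) (hX : bounded_measurable X) :
  infconv (fun i => supVaR (P i) (alpha i)) X =
  ereal_inf [set x%:E | x in
    [set x : R | classC P alpha [set w | (x < X w)%R]]].
Proof.
apply/eqP; rewrite eq_le; apply/andP; split.
  apply: le_ereal_inf_tmp => _ [x Cx <-].
  exact: infconv_supVaR_le_level.
apply: le_ereal_inf_tmp => _ [Xs [bXs sumXs] <-].
exact: classC_inf_le_sum_supVaR hX.1 sumXs.
Qed.
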